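(* Fix constants $c>0$, $g>0$, $A>0$, $Q\in\mathbb{R}$ and $\widetilde Z\in\mathbb{R}$, and set $U=Q/A$. For positive integrable functions $f:\mathbb{R}\to(0,\infty)$ define the kinetic energy functional $$\mathcal E(f)=\int_{\mathbb{R}}\left(\frac{\xi^2}{2}f(\xi)+c^2f(\xi)\log f(\xi)+c^2 f(\xi)\log\!\big(c\sqrt{2\pi}\big)+g\widetilde Z f(\xi)\right)d\xi .$$ Consider the minimization problem $\min\mathcal E(f)$ under the constraints $$f>0,\qquad \int_{\mathbb{R}}f(\xi)\,d\xi=A,\qquad \int_{\mathbb{R}}\xi f(\xi)\,d\xi=Q .$$ Then the minimum is attained (a.e.) by the function $$\mathcal M(\xi)=\frac{A}{c}\,\chi\!\left(\frac{\xi-U}{c}\right),\qquad \chi(w)=\frac{1}{\sqrt{2\pi}}\exp\!\left(-\frac{w^2}{2}\right),$$ and the minimal energy is $$\mathcal E(\mathcal M)=\frac{Q^2}{2A}+c^2A\ln A+gA\widetilde Z .$$ Moreover, if $A=A(X)>0$ and $\widetilde Z=\widetilde Z(X)$ depend (smoothly) on $X$ and form a still water steady state, i.e. $Q=0$ (so $U=0$) and $c^2\ln A(X)+g\widetilde Z(X)$ is constant in $X$, then $\mathcal M(X,\xi)=\frac{A(X)}{c}\chi\!\left(\frac{\xi}{c}\right)$ satisfies $$\xi\,\partial_X\mathcal M-g\,\partial_X\widetilde Z\,\partial_\xi\mathcal M=0 .$$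
   Context: Here $A$ is the equivalent wet area, $Q$ the equivalent discharge, $c$ the sonic speed, $g$ gravity and $\widetilde Z$ the pseudo-altitude of a pressurised pipe-flow model $\partial_tA+\partial_XQ=0$, $\partial_tQ+\partial_X(Q^2/A+c^2A)+g\partial_X\widetilde Z=0$. A still water steady state of this model is a state with $U=Q/A=0$ and $c^2\ln A+g\widetilde Z=\text{const}$. $\log$ and $\ln$ denote the natural logarithm. *)

From HB Require Import structures.
From mathcomp Require Import all_boot all_order all_algebra.
From mathcomp Require Import all_classical all_reals all_analysis.
Set Implicit Arguments. Unset Strict Implicit. Unset Printing Implicit Defensive.
Import Order.TTheory GRing.Theory Num.Theory.
Import numFieldNormedType.Exports.
Local Open Scope classical_set_scope.
Local Open Scope ring_scope.

Section Defs.
Variable R : realType.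

Definition chi (w : R) : R := (Num.sqrt (2 * pi))^-1 * expR (- (w ^+ 2) / 2).

Definition maxwellian (c A U : R) (xi : R) : R := A / c * chi ((xi - U) / c).

Definition energy_density (c g Zt : R) (f : R -> R) (xi : R) : R :=
  xi ^+ 2 / 2 * f xi + c ^+ 2 * f xi * ln (f xi)
  + c ^+ 2 * f xi * ln (c * Num.sqrt (2 * pi)) + g * Zt * f xi.

Definition energy (c g Zt : R) (f : R -> R) : \bar R :=
  (\int[@lebesgue_measure R]_(x in setT) (energy_density c g Zt f x)%:E)%E.

Definition admissible (A Q : R) (f : R -> R) : Prop :=
  [/\ measurable_fun setT f /\ (forall x, 0 < f x),
      (@lebesgue_measure R).-integrable setT (fun x => (f x)%:E),
      (@lebesgue_measure R).-integrable setT (fun x => (x * f x)%:E),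
      (\int[@lebesgue_measure R]_(x in setT) (f x)%:E = A%:E)%E &
      (\int[@lebesgue_measure R]_(x in setT) (x * f x)%:E = Q%:E)%E].

End Defs.

(* For admissible [f] the energy density splits as
     c^2 (f - M) + (c^2 ln A + g Zt - U^2/2) f + U xi f
     + c^2 (f (ln f - ln M) - f + M),
   because ln M = ln A - ln (c sqrt (2 pi)) - (xi - U)^2 / (2 c^2).  The mass
   and momentum constraints fix the integral of the first line, while the
   second line is nonnegative by ln y <= y - 1 and vanishes for f = M.  The
   momentum of M is the mean of a Gaussian, which follows from the parity of
   xi |-> xi chi xi after a translation.
   For the still water state, d_X M = (d_X A / A) M and d_xi M = - xi / c^2 M,
   so the transport term is xi M / c^2 (c^2 d_X (ln A) + g d_X Zt) = 0. *)

From HB Require Import structures.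
From mathcomp Require Import all_boot all_order all_algebra.
From mathcomp Require Import all_classical all_reals all_analysis.
From mathcomp Require Import ring lra measurable_realfun.
Set Implicit Arguments. Unset Strict Implicit. Unset Printing Implicit Defensive.
Import Order.TTheory GRing.Theory Num.Theory.
Import numFieldNormedType.Exports.
Local Open Scope classical_set_scope.
Local Open Scope ring_scope.

Section lebesgue_integral_facts.
Context {R : realType}.
Local Notation mu := (@lebesgue_measure R).

Definition has_integral (h : R -> R) (r : R) : Prop :=
  mu.-integrable setT (EFin \o h) /\ (\int[mu]_x (h x)%:E = r%:E)%E.

Lemma eq_has_integral (h h' : R -> R) (r : R) :
  h =1 h' -> has_integral h r -> has_integral h' r.
Proof.
move=> hh' [ih eh]; split; first by apply: eq_integrable ih => // x _ /=; rewrite hh'.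
by rewrite -eh; apply: eq_integral => x _; rewrite hh'.
Qed.

Lemma has_integralZ (h : R -> R) (k r : R) :
  has_integral h r -> has_integral (fun x => k * h x) (k * r).
Proof.
move=> [ih eh]; have ikh := integrableZl measurableT k ih; split.
  by apply: eq_integrable ikh => // x _ /=; rewrite EFinM.
under eq_integral do rewrite EFinM.
by rewrite integralZl // eh.
Qed.

Lemma has_integralD (h1 h2 : R -> R) (r1 r2 : R) :
  has_integral h1 r1 -> has_integral h2 r2 ->
  has_integral (fun x => h1 x + h2 x) (r1 + r2).
Proof.
move=> [i1 e1] [i2 e2]; split.
  by apply: eq_integrable (integrableD measurableT i1 i2) => // x _ /=; rewrite EFinD.
under eq_integral do rewrite EFinD.
by rewrite (integralD_EFin measurableT i1 i2) e1 e2.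
Qed.

Lemma has_integralB (h1 h2 : R -> R) (r1 r2 : R) :
  has_integral h1 r1 -> has_integral h2 r2 ->
  has_integral (fun x => h1 x - h2 x) (r1 - r2).
Proof.
move=> i1 i2; have := has_integralD i1 (has_integralZ (-1) i2).
by rewrite mulN1r; apply: eq_has_integral => x; rewrite mulN1r.
Qed.

Lemma le_integral_integrable_lb (L d : R -> R) :
  mu.-integrable setT (EFin \o L) -> measurable_fun setT d -> (forall x, L x <= d x) ->
  (\int[mu]_x (L x)%:E <= \int[mu]_x (d x)%:E)%E.
Proof.
move=> iL md Ld.
have mL := measurable_int _ iL.
move/measurable_EFinP: md => md.
rewrite integralE [X in (_ <= X)%E]integralE.
apply: leeB; apply: ge0_le_integral => //.
- exact: measurable_funepos.
- exact: measurable_funepos.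
- by move=> x _; apply: funepos_le (in_setT x) => y _; rewrite lee_fin.
- exact: measurable_funeneg.
- exact: measurable_funeneg.
- by move=> x _; apply: funeneg_le (in_setT x) => y _; rewrite lee_fin.
Qed.

Lemma ge0_integral_center (G : R -> R) (m : R) :
  continuous G -> (forall x, 0 <= G x) ->
  (\int[mu]_x (G (x - m))%:E = \int[mu]_x (G x)%:E)%E.
Proof.
move=> cG G0.
have F'1 : (shift (- m) : R -> R)^`()%classic = cst 1.
  apply/funext => x.
  by rewrite derive1E (@derive_val _ _ _ _ _ _ _ (is_derive_shift x 1 (- m))).
rewrite (@increasing_ge0_integration_by_substitutionT R (shift (- m)) G).
- by apply: eq_integral => x _; rewrite F'1 /= mulr1.
- by move=> x y xy; rewrite /shift ltrD2r.
- by rewrite F'1; exact: cst_continuous.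
- by rewrite F'1; exact: is_cvg_cst.
- by rewrite F'1; exact: is_cvg_cst.
- by move=> x; exact: (@ex_derive _ _ _ _ _ _ _ (is_derive_shift x 1 (- m))).
- exact: cvg_addrr_Ny.
- exact: cvg_addrr.
- exact: cG.
- exact: G0.
Qed.

Lemma has_integral_center (G : R -> R) (m r : R) :
  continuous G -> (forall x, 0 <= G x) ->
  has_integral G r -> has_integral (fun x => G (x - m)) r.
Proof.
move=> cG G0 [iG eG]; rewrite /has_integral ge0_integral_center // eG; split => //.
apply/integrableP; split.
  apply/measurable_EFinP; apply: measurableT_comp; last exact: measurable_funB.
  exact: continuous_measurable_fun.
under eq_integral do rewrite /= ger0_norm ?G0 //.
by rewrite ge0_integral_center // eG ltry.
Qed.

End lebesgue_integral_facts.

Section normal_mean.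
Context {R : realType} (s : R).
Hypothesis s_gt0 : 0 < s.
Local Notation mu := (@lebesgue_measure R).
Local Notation psi := (normal_pdf 0 s).

Let s_neq0 : s != 0. Proof. by rewrite gt_eqF. Qed.

Lemma has_integral_normal_pdf (m : R) : has_integral (normal_pdf m s) 1.
Proof. by split; [exact: integrable_normal_pdf | exact: integral_normal_pdf]. Qed.

Lemma normal_pdf_center (m x : R) : normal_pdf m s x = psi (x - m).
Proof. by rewrite !normal_pdfE // /normal_fun subr0. Qed.

Lemma normal_pdf0N (x : R) : psi (- x) = psi x.
Proof. by rewrite !normal_pdfE // /normal_fun !subr0 sqrrN. Qed.

Lemma normal_pdf_gt0 (m x : R) : 0 < normal_pdf m s x.
Proof. by rewrite normal_pdfE // mulr_gt0 ?normal_peak_gt0 ?expR_gt0. Qed.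

(* Domination of [|x| psi x] by a Gaussian of twice the variance: the ratio is
   [|x| exp (- x^2 / (4 s^2))], which [1 + t <= exp t] bounds by [s]. *)
Lemma abs_mul_normal_pdf_le (x : R) :
  `|x| * psi x <= s * normal_peak s / normal_peak (s * Num.sqrt 2) *
                  normal_pdf 0 (s * Num.sqrt 2) x.
Proof.
set s' := s * Num.sqrt 2.
have s'_neq0 : s' != 0 by rewrite gt_eqF // mulr_gt0 // sqrtr_gt0.
have s'2 : s' ^+ 2 = 2 * s ^+ 2 by rewrite exprMn sqr_sqrtr // mulrC.
rewrite !normal_pdfE // /normal_fun !subr0.
set t := x ^+ 2 / (s ^+ 2 *+ 4).
have -> : - x ^+ 2 / (s' ^+ 2 *+ 2) = - t by rewrite s'2 /t; field.
have -> : - x ^+ 2 / (s ^+ 2 *+ 2) = - t + - t by rewrite /t; field.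
rewrite expRD.
have abs_exp_le : `|x| * expR (- t) <= s.
  rewrite expRN ler_pdivrMr ?expR_gt0 //.
  apply: le_trans (ler_wpM2l (ltW s_gt0) (expR_ge1Dx t)).
  rewrite -subr_ge0.
  have -> : s * (1 + t) - `|x| = (`|x| - 2 * s) ^+ 2 / (s *+ 4).
    by rewrite /t -[x ^+ 2]real_normK ?num_real //; field.
  by rewrite divr_ge0 ?sqr_ge0 // mulrn_wge0 // ltW.
have p_gt0 := normal_peak_gt0 s_neq0.
have p'_neq0 : normal_peak s' != 0 by rewrite gt_eqF // normal_peak_gt0.
have -> : s * normal_peak s / normal_peak s' * (normal_peak s' * expR (- t)) =
          normal_peak s * expR (- t) * s by field.
have -> : `|x| * (normal_peak s * (expR (- t) * expR (- t))) =
          normal_peak s * expR (- t) * (`|x| * expR (- t)) by ring.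
by rewrite ler_wpM2l // ltW // mulr_gt0 ?expR_gt0.
Qed.

Lemma continuous_mul_normal_pdf (h : R -> R) :
  continuous h -> continuous (fun x => h x * psi x).
Proof.
by move=> ch x; apply: continuousM; [exact: ch | exact: continuous_normal_pdf].
Qed.

Lemma integrable_mul_normal_pdf (h : R -> R) :
  continuous h -> (forall x, `|h x| <= `|x|) ->
  mu.-integrable setT (EFin \o (fun x => h x * psi x)).
Proof.
move=> ch h_le; pose K := s * normal_peak s / normal_peak (s * Num.sqrt 2).
have K_ge0 : 0 <= K by rewrite divr_ge0 ?mulr_ge0 ?normal_peak_ge0 ?ltW.
apply: (@le_integrable _ _ _ mu setT measurableT _
          (fun x => K%:E * (normal_pdf 0 (s * Num.sqrt 2) x)%:E)%E).
- apply/measurable_EFinP; apply: continuous_measurable_fun.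
  exact: continuous_mul_normal_pdf.
- move=> x _; rewrite /= lee_fin [leRHS]ger0_norm; last first.
    exact: mulr_ge0 K_ge0 (normal_pdf_ge0 _ _ _).
  rewrite normrM (ger0_norm (normal_pdf_ge0 _ _ _)).
  apply: le_trans (abs_mul_normal_pdf_le x).
  by rewrite ler_wpM2r ?normal_pdf_ge0.
- by apply: integrableZl => //; exact: integrable_normal_pdf.
Qed.

Let xpos (x : R) := (`|x| + x) / 2.
Let xneg (x : R) := (`|x| - x) / 2.

Let xpos_ge0 (x : R) : 0 <= xpos x.
Proof. by apply: divr_ge0 => //; rewrite -lerBlDr sub0r -normrN ler_norm. Qed.

Let xneg_ge0 (x : R) : 0 <= xneg x.
Proof. by apply: divr_ge0 => //; rewrite subr_ge0 ler_norm. Qed.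

Let norm_xpos_le (x : R) : `|xpos x| <= `|x|.
Proof.
rewrite (ger0_norm (xpos_ge0 x)) /xpos.
by have := ler_norm x; have := ler_norm (- x); rewrite normrN; lra.
Qed.

Let norm_xneg_le (x : R) : `|xneg x| <= `|x|.
Proof.
rewrite (ger0_norm (xneg_ge0 x)) /xneg.
by have := ler_norm x; have := ler_norm (- x); rewrite normrN; lra.
Qed.

Let continuous_xpos : continuous xpos.
Proof.
move=> x; apply: (continuousM (s := fun x : R => `|x| + x) (t := fun=> 2^-1));
  last exact: cst_continuous.
by apply: continuousD; [exact: norm_continuous | exact: cvg_id].
Qed.

Let continuous_xneg : continuous xneg.
Proof.
move=> x; apply: (continuousM (s := fun x : R => `|x| - x) (t := fun=> 2^-1));
  last exact: cst_continuous.
by apply: continuousB; [exact: norm_continuous | exact: cvg_id].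
Qed.

Let P (x : R) := xpos x * psi x.
Let N (x : R) := xneg x * psi x.

Let P_ge0 (x : R) : 0 <= P x. Proof. exact: mulr_ge0 (normal_pdf_ge0 _ _ _). Qed.
Let N_ge0 (x : R) : 0 <= N x. Proof. exact: mulr_ge0 (normal_pdf_ge0 _ _ _). Qed.

Let continuous_P : continuous P. Proof. exact: continuous_mul_normal_pdf. Qed.
Let continuous_N : continuous N. Proof. exact: continuous_mul_normal_pdf. Qed.

Let integrable_P : mu.-integrable setT (EFin \o P).
Proof. exact: integrable_mul_normal_pdf. Qed.

Let integrable_N : mu.-integrable setT (EFin \o N).
Proof. exact: integrable_mul_normal_pdf. Qed.

(* [P + N = |x| psi] is even, so its integral is twice that over [0, +oo),
   where it coincides with [P]. *)
Let integral_P_eq_N : exists p, has_integral P p /\ has_integral N p.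
Proof.
have PN : (\int[mu]_x ((`|x| * psi x)%:E) =
           \int[mu]_x (P x)%:E + \int[mu]_x (N x)%:E)%E.
  rewrite -ge0_integralD //; last 4 first.
  - by move=> x _; rewrite lee_fin.
  - exact: measurable_int integrable_P.
  - by move=> x _; rewrite lee_fin.
  - exact: measurable_int integrable_N.
  by apply: eq_integral => x _; rewrite -EFinD /P /N /xpos /xneg; congr EFin; field.
have PP : (\int[mu]_x ((`|x| * psi x)%:E) = 2%:E * \int[mu]_x (P x)%:E)%E.
  rewrite ge0_symfun_integralT; last 3 first.
  - by move=> x; rewrite mulr_ge0 ?normal_pdf_ge0.
  - exact/continuous_mul_normal_pdf/norm_continuous.
  - by move=> x /=; rewrite normrN normal_pdf0N.
  congr (_ * _)%E; rewrite integral_mkcond; apply: eq_integral => x _.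
  rewrite patchE; case: ifPn => [/set_mem /= x_ge0 | /negP x_lt0].
    by rewrite /P /xpos ger0_norm //; congr EFin; field.
  have x_lt0' : x < 0.
    by rewrite ltNge; apply/negP => x0; apply: x_lt0; exact/mem_set.
  by rewrite /P /xpos ltr0_norm // addNr mul0r mul0r.
have Pfin : (\int[mu]_x (P x)%:E)%E \is a fin_num.
  by apply: integrable_fin_num => //; exact: integrable_P.
have Nfin : (\int[mu]_x (N x)%:E)%E \is a fin_num.
  by apply: integrable_fin_num => //; exact: integrable_N.
move: PN; rewrite PP -(fineK Pfin) -(fineK Nfin) -EFinM -EFinD => -[PN].
exists (fine (\int[mu]_x (P x)%:E)%E); split; split => //; first by rewrite fineK.
by rewrite -(fineK Nfin); congr EFin; lra.
Qed.

Lemma normal_pdf_mean (m : R) : has_integral (fun x => x * normal_pdf m s x) m.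
Proof.
have [p [iP iN]] := integral_P_eq_N.
have iPm := has_integral_center m continuous_P P_ge0 iP.
have iNm := has_integral_center m continuous_N N_ge0 iN.
have := has_integralD (has_integralB iPm iNm)
                      (has_integralZ m (has_integral_normal_pdf m)).
rewrite subrr add0r mulr1; apply: eq_has_integral => x.
by rewrite normal_pdf_center /P /N /xpos /xneg; field.
Qed.

End normal_mean.

Lemma ln_le_subr1 {R : realType} (y : R) : 0 < y -> ln y <= y - 1.
Proof. by move=> y_gt0; have := expR_ge1Dx (ln y); rewrite lnK ?posrE //; lra. Qed.

Lemma relative_entropy_density_ge0 {R : realType} (a b : R) :
  0 < a -> 0 < b -> 0 <= a * (ln a - ln b) - a + b.
Proof.
move=> a_gt0 b_gt0; have ba_gt0 : 0 < b / a by rewrite divr_gt0.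
have := ln_le_subr1 ba_gt0; rewrite ln_div ?posrE // -subr_ge0 => h.
have -> : a * (ln a - ln b) - a + b = a * (b / a - 1 - (ln b - ln a)).
  by field; rewrite gt_eqF.
exact: mulr_ge0 (ltW a_gt0) h.
Qed.

Section maxwellian.
Context {R : realType} (c : R).
Hypothesis c_gt0 : 0 < c.

Let c_neq0 : c != 0. Proof. by rewrite gt_eqF. Qed.
Let sqrt2pi_gt0 : 0 < Num.sqrt (2 * pi) :> R.
Proof. by rewrite sqrtr_gt0 mulr_gt0 // pi_gt0. Qed.

Lemma maxwellianE (A U x : R) : maxwellian c A U x = A * normal_pdf U c x.
Proof.
rewrite /maxwellian /chi normal_pdfE // /normal_peak /normal_fun.
have -> : c ^+ 2 * pi *+ 2 = c ^+ 2 * (2 * pi) by rewrite -mulrnAr -mulr_natl.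
rewrite (@sqrtrM _ (c ^+ 2)) ?sqr_ge0 // sqrtr_sqr gtr0_norm //.
have -> : - ((x - U) / c) ^+ 2 / 2 = - (x - U) ^+ 2 / (c ^+ 2 *+ 2) by field.
by field; rewrite c_neq0 gt_eqF.
Qed.

Lemma maxwellian_gt0 (A U x : R) : 0 < A -> 0 < maxwellian c A U x.
Proof. by move=> A_gt0; rewrite maxwellianE mulr_gt0 ?normal_pdf_gt0. Qed.

Lemma ln_maxwellian (A U x : R) : 0 < A ->
  ln (maxwellian c A U x) =
  ln A - ln (c * Num.sqrt (2 * pi)) - (x - U) ^+ 2 / (2 * c ^+ 2).
Proof.
move=> A_gt0; have cs_gt0 : 0 < c * Num.sqrt (2 * pi) by rewrite mulr_gt0.
have -> : maxwellian c A U x =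
          A / (c * Num.sqrt (2 * pi)) * expR (- ((x - U) / c) ^+ 2 / 2).
  by rewrite /maxwellian /chi; field; rewrite c_neq0 gt_eqF.
rewrite lnM ?posrE ?expR_gt0 ?divr_gt0 // ln_div ?posrE // expRK.
by field.
Qed.

Lemma has_integral_maxwellian (A U : R) : has_integral (maxwellian c A U) A.
Proof.
have := has_integralZ A (has_integral_normal_pdf c U); rewrite mulr1.
by apply: eq_has_integral => x; rewrite maxwellianE.
Qed.

Lemma has_integral_mul_maxwellian (A U : R) :
  has_integral (fun x => x * maxwellian c A U x) (A * U).
Proof.
apply: eq_has_integral (has_integralZ A (normal_pdf_mean c_gt0 U)) => x.
by rewrite maxwellianE mulrCA.
Qed.

Lemma admissible_maxwellian (A Q : R) : 0 < A ->
  admissible A Q (maxwellian c A (Q / A)).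
Proof.
move=> A_gt0; have [iM eM] := has_integral_maxwellian A (Q / A).
have [ixM exM] := has_integral_mul_maxwellian A (Q / A).
rewrite mulrCA divff ?gt_eqF // mulr1 in exM.
split => //; split => [|x]; last exact: maxwellian_gt0.
rewrite (funext (maxwellianE A (Q / A))).
exact: measurable_funM (measurable_normal_pdf _ _).
Qed.

End maxwellian.

Section maxwellian_energy.
Context {R : realType} (c g A Q Zt : R).
Hypotheses (c_gt0 : 0 < c) (A_gt0 : 0 < A).
Local Notation mu := (@lebesgue_measure R).
Local Notation U := (Q / A).
Local Notation M := (maxwellian c A (Q / A)).

(* The part of the energy density that is affine in [f] and in [x f]; its
   integral over an admissible [f] is fixed by the mass and momentum. *)
Let energy_affine (f : R -> R) (x : R) : R :=
  c ^+ 2 * (f x - M x) + (c ^+ 2 * ln A + g * Zt - U ^+ 2 / 2) * f x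
  + U * (x * f x).

Let energy_densityE (f : R -> R) (x : R) : 0 < f x ->
  energy_density c g Zt f x =
  energy_affine f x + c ^+ 2 * (f x * (ln (f x) - ln (M x)) - f x + M x).
Proof.
move=> fx_gt0; rewrite ln_maxwellian // /energy_density /energy_affine.
rewrite lnM ?posrE ?sqrtr_gt0 ?mulr_gt0 ?pi_gt0 //.
by field; rewrite !gt_eqF.
Qed.

Let has_integral_energy_affine (f : R -> R) : admissible A Q f ->
  has_integral (energy_affine f)
    (Q ^+ 2 / (2 * A) + c ^+ 2 * A * ln A + g * A * Zt).
Proof.
move=> [_ if_ ixf ef exf].
have := has_integralD
  (has_integralD (has_integralZ (c ^+ 2) (has_integralB (conj if_ ef)
                                            (has_integral_maxwellian c_gt0 A U)))
                 (has_integralZ (c ^+ 2 * ln A + g * Zt - U ^+ 2 / 2) (conj if_ ef)))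
  (has_integralZ U (conj ixf exf)).
have -> : c ^+ 2 * (A - A) + (c ^+ 2 * ln A + g * Zt - U ^+ 2 / 2) * A + U * Q =
          Q ^+ 2 / (2 * A) + c ^+ 2 * A * ln A + g * A * Zt.
  by field; rewrite gt_eqF.
exact: eq_has_integral.
Qed.

Let measurable_energy_density (f : R -> R) :
  measurable_fun setT f -> measurable_fun setT (energy_density c g Zt f).
Proof.
move=> mf; have mlnf := measurableT_comp (@measurable_ln R) mf.
by repeat apply: measurable_funD; repeat apply: measurable_funM.
Qed.

Lemma energy_maxwellian :
  energy c g Zt M = (Q ^+ 2 / (2 * A) + c ^+ 2 * A * ln A + g * A * Zt)%:E.
Proof.
have [_ <-] := has_integral_energy_affine (admissible_maxwellian c_gt0 Q A_gt0).
apply: eq_integral => x _; rewrite energy_densityE ?maxwellian_gt0 //.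
by rewrite subrr mulr0 sub0r addNr mulr0 addr0.
Qed.

Lemma maxwellian_energy_le (f : R -> R) : admissible A Q f ->
  (energy c g Zt M <= energy c g Zt f)%E.
Proof.
move=> f_adm; have [[mf f_gt0] _ _ _ _] := f_adm.
have [iL eL] := has_integral_energy_affine f_adm.
rewrite energy_maxwellian -eL; apply: le_integral_integrable_lb iL _ _ => [|x].
  exact: measurable_energy_density.
rewrite energy_densityE // lerDl mulr_ge0 ?sqr_ge0 //.
exact: relative_entropy_density_ge0 (f_gt0 x) (maxwellian_gt0 _ _ _ A_gt0).
Qed.

End maxwellian_energy.

Section still_water.
Context {R : realType} (c : R).
Hypothesis c_neq0 : c != 0.

Lemma maxwellian_mass (A U x : R) : maxwellian c A U x = A * maxwellian c 1 U x.
Proof. by rewrite /maxwellian mul1r mulrA. Qed.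

Lemma derive1_maxwellian (A U xi : R) :
  derive1 (maxwellian c A U) xi = - (xi - U) / c ^+ 2 * maxwellian c A U xi.
Proof.
have sqrt2pi_neq0 : Num.sqrt (2 * pi) != 0 :> R.
  by rewrite gt_eqF // sqrtr_gt0 mulr_gt0 // pi_gt0.
have -> : maxwellian c A U =
          (fun x => A / c / Num.sqrt (2 * pi) * expR (- ((x - U) / c) ^+ 2 / 2)).
  by apply/funext => x; rewrite /maxwellian /chi !mulrA.
have df : is_derive xi 1
    (fun x => A / c / Num.sqrt (2 * pi) * expR (- ((x - U) / c) ^+ 2 / 2))
    (- (xi - U) / c ^+ 2 *
     (A / c / Num.sqrt (2 * pi) * expR (- ((xi - U) / c) ^+ 2 / 2))).
  apply: trigger_derive; rewrite /GRing.scale /=.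
  by field; rewrite c_neq0 sqrt2pi_neq0.
by rewrite derive1E; exact: (@derive_val _ _ _ _ _ _ _ df).
Qed.

Lemma derive1_maxwellian_mass (A : R -> R) (U xi X : R) : derivable A X 1 ->
  derive1 (fun y => maxwellian c (A y) U xi) X = derive1 A X * maxwellian c 1 U xi.
Proof.
move=> dA; rewrite (_ : (fun y => _) = (fun y => A y * maxwellian c 1 U xi)).
  exact: derive1Mr.
by apply/funext => y; rewrite maxwellian_mass.
Qed.

Lemma still_water_derive (g C X : R) (A Zt : R -> R) :
  0 < A X -> derivable A X 1 -> derivable Zt X 1 ->
  (forall y, c ^+ 2 * ln (A y) + g * Zt y = C) ->
  c ^+ 2 * (derive1 A X / A X) + g * derive1 Zt X = 0.
Proof.
move=> AX_gt0 dA dZt eqC.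
have dlnA := @is_derive1_comp R (@ln R) A X _ _
  (is_derive1_ln AX_gt0) (derivableP dA).
have dh := @is_deriveD R R R _ _ X 1 _ _
  (@is_deriveZ R R R _ (c ^+ 2) X 1 _ dlnA)
  (@is_deriveZ R R R Zt g X 1 _ (derivableP dZt)).
have hC : c ^+ 2 \*: (@ln R \o A) + g \*: Zt = cst C.
  by apply/funext => y; rewrite -(eqC y).
move: (@derive_val _ _ _ _ _ _ _ dh); rewrite hC derive_cst !derive1E => ->.
by rewrite [_ / A X]mulrC.
Qed.

End still_water.

Theorem theorem3 (R : realType) (c g : R) (hc : 0 < c) (hg : 0 < g) :
  (forall (A Q Zt : R), 0 < A ->
     let M := maxwellian c A (Q / A) in
     [/\ admissible A Q M,
         (forall f : R -> R, admissible A Q f ->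
            (energy c g Zt M <= energy c g Zt f)%E) &
         energy c g Zt M
           = (Q ^+ 2 / (2 * A) + c ^+ 2 * A * ln A + g * A * Zt)%:E])
  /\
  (forall (A Zt : R -> R),
     (forall X, 0 < A X) ->
     (forall X, derivable A X 1) ->
     (forall X, derivable Zt X 1) ->
     (exists C : R, forall X, c ^+ 2 * ln (A X) + g * Zt X = C) ->
     let M := fun X xi => maxwellian c (A X) 0 xi in
     forall X xi : R,
       xi * derive1 (fun y => M y xi) X
       - g * derive1 Zt X * derive1 (fun w => M X w) xi = 0).
Proof.
have c_neq0 : c != 0 by rewrite gt_eqF.
split=> [A Q Zt A_gt0 M | A Zt A_gt0 dA dZt [C eqC] M X xi].
  split; [exact: admissible_maxwellian | exact: maxwellian_energy_le |].
  exact: energy_maxwellian.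
have still := still_water_derive (A_gt0 X) (dA X) (dZt X) eqC.
rewrite /M derive1_maxwellian_mass // derive1_maxwellian //.
rewrite (maxwellian_mass c (A X)); set m1 := maxwellian c 1 0 xi.
have -> : xi * (derive1 A X * m1)
          - g * derive1 Zt X * (- (xi - 0) / c ^+ 2 * (A X * m1)) =
          xi * m1 * A X / c ^+ 2 *
          (c ^+ 2 * (derive1 A X / A X) + g * derive1 Zt X).
  by field; rewrite c_neq0 gt_eqF.
by rewrite still mulr0.
Qed.
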